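(* Let $G$ be a graph and let $L$ be a set of specified leaks on $V(G)$ with $I(L)=1$. Then a set $B\subseteq V(G)$ is an $L$-leaky forcing set of $G$ if and only if $B$ is a specified $1$-leaky forcing set of $G$.
   Context: All graphs are finite, simple and undirected. Zero forcing: a blue vertex $u$ with exactly one white neighbor $w$ may force $w$ (color it blue), written $u\to w$. A specified leak on $V(G)$ is an ordered pair $x\to y$ of vertices, meaning $x$ (the tail) is prohibited from forcing $y$ (the head). For a set $L$ of specified leaks, $T(L)$ and $H(L)$ denote its sets of tails and heads. $B$ is a specified $\ell$-leaky forcing set if for every set of at most $\ell$ specified leaks, exhaustively applying the forcing rule from initial blue set $B$ without performing prohibited forces colors all of $V(G)$ blue. Two sets $L_1,L_2$ of specified leaks on $V(G)$ are isomorphic if there is a bijection $\phi:V(G)\to V(G)$ with $x\to y\in L_1$ iff $\phi(x)\to\phi(y)\in L_2$. $B$ is an $L$-leaky forcing set if $B$ colors all of $G$ blue despite any set $L_1$ of specified leaks isomorphic to some subset $L_2\subseteq L$. A set $L$ of specified leaks is independent if $|T(L)|=|L|$ and $T(L)\cap H(L)=\varnothing$; $I(L)$ is the maximum size of an independent subset of $L$. *)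

From mathcomp Require Import all_boot all_fingroup.
Set Implicit Arguments. Unset Strict Implicit. Unset Printing Implicit Defensive.

(* A graph is a symmetric irreflexive relation e on a finType T.
   A specified leak x -> y is the ordered pair (x, y) : T * T; a set of
   specified leaks is a {set T * T}. *)

Section Leaky.
Variable T : finType.
Variable e : rel T.

Definition force_step (L : {set T * T}) (S S' : {set T}) : Prop :=
  exists u w, [/\ u \in S, w \notin S, e u w,
    (forall v, e u v -> v != w -> v \in S)
    & (u, w) \notin L /\ S' = w |: S].

Inductive reachable (L : {set T * T}) (B : {set T}) : {set T} -> Prop :=
| reach_refl : reachable L B B
| reach_step S S' : reachable L B S -> force_step L S S' -> reachable L B S'.

Definition stuck (L : {set T * T}) (S : {set T}) : Prop :=
  forall S', ~ force_step L S S'.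

Definition forces_despite (L : {set T * T}) (B : {set T}) : Prop :=
  forall S, reachable L B S -> stuck L S -> S = [set: T].

Definition specified_leaky_forcing (l : nat) (B : {set T}) : Prop :=
  forall L : {set T * T}, #|L| <= l -> forces_despite L B.

(* Isomorphism of sets of specified leaks (bijection of V(G), not
   necessarily a graph automorphism). *)
Definition leaks_iso (L1 L2 : {set T * T}) : Prop :=
  exists phi : {perm T}, forall x y, ((x, y) \in L1) = ((phi x, phi y) \in L2).

Definition L_leaky_forcing (L : {set T * T}) (B : {set T}) : Prop :=
  forall L1 L2 : {set T * T}, L2 \subset L -> leaks_iso L1 L2 ->
    forces_despite L1 B.

End Leaky.

Definition tails (T : finType) (L : {set T * T}) : {set T} := [set p.1 | p in L].
Definition heads (T : finType) (L : {set T * T}) : {set T} := [set p.2 | p in L].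

Definition independent_leaks (T : finType) (L : {set T * T}) : bool :=
  (#|tails L| == #|L|) && [disjoint tails L & heads L].

Definition indep_number (T : finType) (L : {set T * T}) : nat :=
  \max_(L' : {set T * T} | (L' \subset L) && independent_leaks L') #|L'|.

From mathcomp Require Import all_boot all_fingroup.
Set Implicit Arguments. Unset Strict Implicit. Unset Printing Implicit Defensive.

(* For a blue set S, let available_forces S be the set of pairs
   (u, w) such that u is blue and w is the unique white neighbour of u, i.e.
   the forces that could be performed next.  If S is reachable from B and
   stuck under some leak set L, then every available force is prohibited,
   so available_forces S is a subset of L; moreover S is still reachable
   and stuck when only the leaks available_forces S are specified.  Hence
   B forces G despite L as soon as it does so despite every leak set of the
   form available_forces S contained in L (forces_despite_available).
   Distinct available forces have distinct tails, tails are blue and heads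
   white, so available_forces S is an independent set of leaks.
   Now let I(L) = 1.  A leak set available_forces S of size at most one is
   isomorphic to a subset of L (the empty set, or a single non-loop leak
   of L); conversely, the image of an independent subset of an isomorphic
   copy of a subset of L is an independent subset of L, hence of size at
   most one.  These two facts give the two directions of the theorem. *)

Section AvailableForces.
Variable T : finType.
Variable e : rel T.

Definition available_forces (S : {set T}) : {set T * T} :=
  [set p | [&& p.1 \in S, p.2 \notin S, e p.1 p.2 &
     [forall v, e p.1 v ==> (v != p.2) ==> (v \in S)]]].

Lemma reachable_transfer (L L' : {set T * T}) (B S : {set T}) :
  reachable e L B S ->
  (forall u w, w \in S -> (u, w) \in L' -> (u, w) \in L) ->
  reachable e L' B S.
Proof.
elim=> [|S1 S2 _ IH [u [w [hu hw he hv [hL ->]]]]] hL'; first exact: reach_refl.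
apply: reach_step (IH _) _.
  by move=> u' w' hw'; apply: hL'; rewrite in_setU1 hw' orbT.
exists u, w; split=> //; split=> //.
by apply: contra hL => /hL'; apply; rewrite in_setU1 eqxx.
Qed.

Lemma stuck_available_sub (L : {set T * T}) (S : {set T}) :
  stuck e L S -> available_forces S \subset L.
Proof.
move=> hstuck; apply/subsetP=> -[u w]; rewrite inE /= => /and4P[hu hw he /forallP hv].
apply/negPn/negP=> hL; apply: (hstuck (w |: S)); exists u, w; split=> //.
by move=> v hev hvw; move: (hv v); rewrite hev hvw.
Qed.

Lemma stuck_available (S : {set T}) : stuck e (available_forces S) S.
Proof.
move=> S' [u [w [hu hw he hv [hL _]]]]; move/negP: hL; apply.
rewrite inE /= hu hw he; apply/forallP=> v; apply/implyP=> hev; apply/implyP.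
exact: hv.
Qed.

(* Available forces have white heads, so they never block a chain into S. *)
Lemma reachable_available (L : {set T * T}) (B S : {set T}) :
  reachable e L B S -> reachable e (available_forces S) B S.
Proof.
move=> hr; apply: reachable_transfer hr _ => u w hw.
by rewrite inE /= hw !andbF.
Qed.

Lemma forces_despite_available (L : {set T * T}) (B : {set T}) :
  (forall S, available_forces S \subset L ->
     forces_despite e (available_forces S) B) ->
  forces_despite e L B.
Proof.
move=> hB S hr hstuck.
exact: (hB S (stuck_available_sub hstuck) S (reachable_available hr)
          (@stuck_available S)).
Qed.

Lemma available_tail_inj (S : {set T}) :
  {in available_forces S &, injective (fun p : T * T => p.1)}.
Proof.
move=> [u w] [u' w']; rewrite !inE /= => /and4P[_ _ _ /forallP hv]
  /and4P[_ hw' he' _] eu; subst u'.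
case: (eqVneq w w') => [->//|hne].
by move: (hv w'); rewrite he' eq_sym hne /= (negbTE hw').
Qed.

Lemma available_independent (S : {set T}) :
  independent_leaks (available_forces S).
Proof.
apply/andP; split; first by rewrite card_in_imset //; exact: available_tail_inj.
rewrite disjoints_subset; apply/subsetP=> _ /imsetP[[u w] huw ->] /=.
rewrite inE; apply/imsetP=> -[[u' w'] hu'w' /= eu].
by move: huw hu'w'; rewrite !inE /= eu => /and4P[-> _ _ _] /and4P[_ /negP].
Qed.

End AvailableForces.

Section IndependenceNumber.
Variable T : finType.

Lemma independent_singleton (a b : T) :
  independent_leaks [set (a, b)] = (a != b).
Proof.
rewrite /independent_leaks /tails /heads !imset_set1 !cards1 eqxx /=.
by rewrite disjoints1 inE eq_sym.
Qed.

Lemma indep_number_max (L P : {set T * T}) :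
  P \subset L -> independent_leaks P -> #|P| <= indep_number L.
Proof.
by move=> sPL hP; apply: (leq_bigmax_cond (F := fun X : {set T * T} => #|X|));
  rewrite sPL.
Qed.

Lemma indep_number_attained (L : {set T * T}) :
  exists2 P : {set T * T}, (P \subset L) && independent_leaks P &
    #|P| = indep_number L.
Proof.
have h0 : (set0 \subset L) && independent_leaks (set0 : {set T * T}).
  rewrite sub0set /independent_leaks /tails /heads !imset0 !cards0 /=.
  by rewrite disjoints_subset sub0set.
rewrite /indep_number (bigmax_eq_arg set0 h0).
by case: arg_maxnP => // P hP _; exists P.
Qed.

Lemma indep_number1_leak (L : {set T * T}) :
  indep_number L = 1 -> exists a b, (a, b) \in L /\ a != b.
Proof.
move=> hL; have [P /andP[sPL hP]] := indep_number_attained L.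
rewrite hL => /eqP/cards1P[[a b] defP].
exists a, b; split; first by apply: (subsetP sPL); rewrite defP set11.
by rewrite -independent_singleton -defP.
Qed.

Definition leak_image (phi : {perm T}) (P : {set T * T}) : {set T * T} :=
  [set (phi p.1, phi p.2) | p in P].

Lemma card_leak_image (phi : {perm T}) (P : {set T * T}) :
  #|leak_image phi P| = #|P|.
Proof.
by apply: card_imset => -[x y] [x' y'] [/perm_inj -> /perm_inj ->].
Qed.

Lemma leak_image_independent (phi : {perm T}) (P : {set T * T}) :
  independent_leaks P -> independent_leaks (leak_image phi P).
Proof.
have tailsE : tails (leak_image phi P) = phi @: tails P.
  by rewrite /tails /leak_image -!imset_comp.
have headsE : heads (leak_image phi P) = phi @: heads P.
  by rewrite /heads /leak_image -!imset_comp.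
rewrite /independent_leaks tailsE headsE card_leak_image imset_disjoint;
  last exact: perm_inj.
by rewrite card_imset //; exact: perm_inj.
Qed.

Lemma leaks_iso_indep_le (L L1 L2 P : {set T * T}) :
  L2 \subset L -> leaks_iso L1 L2 -> P \subset L1 -> independent_leaks P ->
  #|P| <= indep_number L.
Proof.
move=> sL2L [phi hphi] sPL1 hP; rewrite -(card_leak_image phi).
apply: indep_number_max; last exact: leak_image_independent.
apply/subsetP=> _ /imsetP[[x y] hxy ->]; apply: (subsetP sL2L).
by rewrite -hphi (subsetP sPL1).
Qed.

Lemma single_leaks_iso (u w a b : T) :
  u != w -> a != b -> leaks_iso [set (u, w)] [set (a, b)].
Proof.
move=> uw ab; pose w' := tperm u a w.
have w'a : w' != a by rewrite /w' -{2}(tpermL u a) (inj_eq perm_inj) eq_sym.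
pose phi := (tperm u a * tperm w' b)%g.
have phi_u : phi u = a by rewrite permM tpermL tpermD // eq_sym.
have phi_w : phi w = b by rewrite permM -/w' tpermL.
exists phi => x y.
by rewrite !inE -phi_u -phi_w !xpair_eqE !(inj_eq perm_inj).
Qed.

End IndependenceNumber.

Theorem proposition5p2 (T : finType) (e : rel T)
  (e_sym : symmetric e) (e_irr : irreflexive e)
  (L : {set T * T}) (hL : indep_number L = 1) (B : {set T}) :
  L_leaky_forcing e L B <-> specified_leaky_forcing e 1 B.
Proof.
split=> [hLB L1 cardL1 | h1 L1 L2 sL2L hiso].
- apply: forces_despite_available => S sSL1.
  have : #|available_forces e S| <= 1 := leq_trans (subset_leq_card sSL1) cardL1.
  rewrite leq_eqVlt ltnS leqn0 => /orP[/cards1P[[u w] defP] | /eqP/cards0_eq ->].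
  + have [a [b [habL ab]]] := indep_number1_leak hL.
    have uw : u != w.
      by rewrite -independent_singleton -defP available_independent.
    rewrite defP; apply: (hLB _ [set (a, b)]); first by rewrite sub1set.
    exact: single_leaks_iso.
  + by apply: (hLB set0 set0 (sub0set L)); exists 1%g => x y; rewrite !inE.
- apply: forces_despite_available => S sSL1; apply: h1.
  rewrite -hL; apply: (leaks_iso_indep_le sL2L hiso sSL1).
  exact: available_independent.
Qed.
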